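(* Let $\alpha,\beta\in\{-1,0,1\}$, and let $\tilde{C}\in\{0,1\}^{\tilde{K}\times n}$ and $\hat{C}\in\{0,1\}^{\hat{K}\times n}$ be cost matrices of two ordinal objectives on the same $n$ elements. Then the matrix \[ A=\begin{pmatrix}\alpha\,\tilde{C} & I_{\tilde{K}} & 0\\ \beta\,\hat{C} & 0 & I_{\hat{K}}\end{pmatrix} \] (the constraint matrix, in standard form with slack variables, of the system $\alpha\tilde{C}x\le \tilde{b}$, $\beta\hat{C}x\le\hat{b}$) is totally unimodular, where $I_m$ denotes the $m\times m$ identity matrix.
   Context: An ordinal objective on $n$ elements with $K$ categories $\eta_1\prec\dots\prec\eta_K$ is given by an assignment $o:\{1,\dots,n\}\to\{\eta_1,\dots,\eta_K\}$; its cost matrix $C\in\{0,1\}^{K\times n}$ has $C_{ji}=1$ if $j\le k$ where $o(i)=\eta_k$, and $C_{ji}=0$ otherwise. $\tilde{C}$ and $\hat{C}$ are such matrices for assignments $\tilde{o}$ (with $\tilde{K}$ categories) and $\hat{o}$ (with $\hat{K}$ categories). A matrix is totally unimodular if every square submatrix has determinant in $\{-1,0,1\}$. *)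

From mathcomp Require Import all_boot all_order all_algebra.
Set Implicit Arguments. Unset Strict Implicit. Unset Printing Implicit Defensive.
Import GRing.Theory.
Local Open Scope ring_scope.

(* Categories eta_1 < ... < eta_K are represented by 'I_K (eta_{k+1} <-> k).
   An ordinal objective is an assignment o : 'I_n -> 'I_K.
   Cost matrix: C j i = 1 iff j <= o i (0-based, same as 1-based j <= k). *)
Definition cost_matrix (K n : nat) (o : 'I_n -> 'I_K) : 'M[int]_(K, n) :=
  \matrix_(j < K, i < n) (if (j <= o i)%N then 1 else 0).

Definition totally_unimodular (m p : nat) (A : 'M[int]_(m, p)) : Prop :=
  forall (k : nat) (f : 'I_k -> 'I_m) (g : 'I_k -> 'I_p),
    injective f -> injective g ->
    let d := \det (mxsub f g A) in d = 0 \/ d = 1 \/ d = -1.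

Definition in_m101 (a : int) : Prop := a = -1 \/ a = 0 \/ a = 1.

Definition ordinal_system_matrix (n Kt Kh : nat) (alpha beta : int)
  (Ct : 'M[int]_(Kt, n)) (Ch : 'M[int]_(Kh, n)) : 'M[int]_(Kt + Kh, n + (Kt + Kh)) :=
  col_mx (row_mx (alpha *: Ct) (row_mx 1%:M 0))
         (row_mx (beta *: Ch) (row_mx 0 1%:M)).

(* Total unimodularity survives appending an identity block (expand along its
   columns) and scaling rows by -1, 0 or 1.  If the rows of C~ are listed in
   reverse order followed by those of C^, every column of the stacked matrix
   (C~; C^) has its ones in a block of consecutive positions, and such interval
   matrices are totally unimodular: let r0 be the row of least position;
   subtracting, among the columns covering r0, the one ending first from the
   others leaves a single 1 in row r0 and keeps all columns intervals, so the
   determinant is +-1 times a smaller interval minor, or 0. *)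

From mathcomp Require Import all_boot all_order all_algebra.
From mathcomp Require Import zify.
Set Implicit Arguments.
Unset Strict Implicit.
Unset Printing Implicit Defensive.
Import GRing.Theory.
Local Open Scope ring_scope.

Lemma in_m101M (a b : int) : in_m101 a -> in_m101 b -> in_m101 (a * b).
Proof. by move=> [->|[->|->]] [->|[->|->]]; rewrite /in_m101; auto. Qed.

Lemma in_m101_sign (e : nat) : in_m101 ((-1) ^+ e).
Proof. by rewrite -signr_odd /in_m101; case: odd; auto. Qed.

Lemma in_m101_cofactor n (A : 'M[int]_n) i j :
  in_m101 (\det (row' i (col' j A))) -> in_m101 (cofactor A i j).
Proof. exact/in_m101M/in_m101_sign. Qed.

Lemma totally_unimodularP m p (A : 'M[int]_(m, p)) :
  totally_unimodular A <->
  forall k (f : 'I_k -> 'I_m) (g : 'I_k -> 'I_p),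
    injective f -> injective g -> in_m101 (\det (mxsub f g A)).
Proof.
split=> tuA k f g injf injg; have := tuA k f g injf injg; rewrite /in_m101 /=.
  by case=> [|[]] ->; auto.
by case=> [|[]] ->; auto.
Qed.

Section DeterminantExpansion.
Variable R : comPzRingType.

Lemma expand_det_col_delta n (A : 'M[R]_n) i0 j :
  (forall i, A i j = (i == i0)%:R) -> \det A = cofactor A i0 j.
Proof.
move=> Aj; rewrite (expand_det_col A j) (bigD1 i0) //= Aj eqxx mul1r.
by rewrite big1 ?addr0 // => i /negbTE i_i0; rewrite Aj i_i0 mul0r.
Qed.

Lemma expand_det_row_delta n (A : 'M[R]_n) i j0 :
  (forall j, A i j = (j == j0)%:R) -> \det A = cofactor A i j0.
Proof.
move=> Ai; rewrite (expand_det_row A i) (bigD1 j0) //= Ai eqxx mul1r.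
by rewrite big1 ?addr0 // => j /negbTE j_j0; rewrite Ai j_j0 mul0r.
Qed.

Lemma det_add_col_mul n (A : 'M[R]_n) j0 (a : 'I_n -> R) : a j0 = 0 ->
  \det (\matrix_(i, j) (A i j + a j * A i j0)) = \det A.
Proof.
move=> a_j0; pose U : 'M[R]_n := 1%:M + delta_mx j0 0 *m \row_j a j.
have -> : \matrix_(i, j) (A i j + a j * A i j0) = A *m U.
  rewrite mulmxDr mulmx1 mulmxA -colE; apply/matrixP => i j.
  by rewrite !mxE big_ord1 !mxE mulrC.
rewrite det_mulmx (expand_det_col_delta (A := U) (i0 := j0) (j := j0)) /cofactor => [|i].
  have -> : row' j0 (col' j0 U) = 1%:M.
    apply/matrixP => i j; rewrite !mxE big_ord1 !mxE (inj_eq lift_inj).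
    by rewrite lift_eqF mul0r addr0.
  by rewrite det1 mulr1 addnn -signr_odd odd_double mulr1.
by rewrite !mxE big_ord1 !mxE a_j0 mulr0 addr0.
Qed.

End DeterminantExpansion.

Definition interval_mx m p (pos : 'I_m -> nat) (lo hi : 'I_p -> nat) : 'M[int]_(m, p) :=
  \matrix_(i, j) (lo j <= pos i <= hi j)%N%:R.

Lemma mxsub_interval_mx m p k l (pos : 'I_m -> nat) (lo hi : 'I_p -> nat)
    (f : 'I_k -> 'I_m) (g : 'I_l -> 'I_p) :
  mxsub f g (interval_mx pos lo hi) = interval_mx (pos \o f) (lo \o g) (hi \o g).
Proof. by apply/matrixP => i j; rewrite !mxE. Qed.

Lemma interval_indicatorB (l1 h1 l2 h2 q x : nat) :
  (l1 <= q <= h1)%N -> (l2 <= q <= h2)%N -> (h2 <= h1)%N -> (q <= x)%N ->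
  (l1 <= x <= h1)%N%:R - (l2 <= x <= h2)%N%:R = (h2 < x <= h1)%N%:R :> int.
Proof.
move=> /andP[l1q _] /andP[l2q _] h2h1 qx.
rewrite (leq_trans l1q qx) (leq_trans l2q qx) /=.
by case: (leqP x h2) => [xh2 | _]; rewrite ?(leq_trans xh2 h2h1) ?subrr ?subr0.
Qed.

Lemma det_interval_mx k (pos lo hi : 'I_k -> nat) :
  in_m101 (\det (interval_mx pos lo hi)).
Proof.
elim: k => [|k IH] in pos lo hi *; first by rewrite det_mx00; right; right.
have [r0 _ pos_min] := arg_minnP pos (isT : xpredT ord0).
pose S c := (lo c <= pos r0 <= hi c)%N.
have [c1 S_c1 | noS] := pickP S; last first.
  rewrite (expand_det_row _ r0) big1 => [|c _]; first by right; left.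
  by move: (noS c); rewrite mxE /S => ->; rewrite mul0r.
have [j0 S_j0 hi_min] := arg_minnP hi S_c1.
pose lo' c := if S c && (c != j0) then (hi j0).+1 else lo c.
have -> : \det (interval_mx pos lo hi) = \det (interval_mx pos lo' hi).
  rewrite -(@det_add_col_mul _ _ _ j0 (fun c => - (S c && (c != j0))%:R));
    last by rewrite eqxx andbF oppr0.
  congr (\det _); apply/matrixP => r c; rewrite !mxE /lo'.
  case: ifP => [/andP[S_c _] | _]; last by rewrite mul0r addr0.
  by rewrite mulN1r (interval_indicatorB S_c S_j0 (hi_min c S_c) (pos_min r isT)).
rewrite (expand_det_row_delta (i := r0) (j0 := j0)) => [|c]; last first.
  have /andP[lo_j0 pos_hi_j0] := S_j0.
  rewrite mxE /lo'; have [-> | _] := eqVneq c j0.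
    by rewrite andbF /= lo_j0 pos_hi_j0.
  rewrite andbT; case: ifP => [_ | nS_c].
    by rewrite ltnNge pos_hi_j0.
  by move: nS_c; rewrite /S => ->.
apply: in_m101_cofactor.
have -> : row' r0 (col' j0 (interval_mx pos lo' hi)) =
          interval_mx (pos \o lift r0) (lo' \o lift j0) (hi \o lift j0).
  by apply/matrixP => i j; rewrite !mxE.
exact: IH.
Qed.

Lemma totally_unimodular_interval_mx m p (pos : 'I_m -> nat) (lo hi : 'I_p -> nat) :
  totally_unimodular (interval_mx pos lo hi).
Proof.
by apply/totally_unimodularP => k f g _ _; rewrite mxsub_interval_mx; apply: det_interval_mx.
Qed.

Lemma totally_unimodular_diag_mul m p (d : 'rV[int]_m) (A : 'M[int]_(m, p)) :
  (forall i, in_m101 (d 0 i)) -> totally_unimodular A ->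
  totally_unimodular (diag_mx d *m A).
Proof.
move=> d_m101 /totally_unimodularP tuA; apply/totally_unimodularP => k f g injf injg.
have -> : mxsub f g (diag_mx d *m A) = diag_mx (colsub f d) *m mxsub f g A.
  by apply/matrixP => i j; rewrite !mul_diag_mx !mxE.
rewrite det_mulmx det_diag; apply: in_m101M (tuA k f g injf injg).
by apply: big_ind => [|a b|i _]; [right; right | exact: in_m101M | rewrite mxE].
Qed.

Lemma totally_unimodular_row_mx1 m p (A : 'M[int]_(m, p)) :
  totally_unimodular A -> totally_unimodular (row_mx A 1%:M).
Proof.
move/totally_unimodularP => tuA; apply/totally_unimodularP.
elim=> [|k IH] f g injf injg; first by rewrite det_mx00; right; right.
have [c p_le_gc | gc_lt_p] := pickP (fun c => p <= g c)%N.
  have [j g_c] : exists j, g c = rshift p j.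
    case: (splitP (g c)) => [i /= gi | j gj]; last by exists j; apply: val_inj.
    by move: p_le_gc; rewrite gi leqNgt ltn_ord.
  have col_c r : mxsub f g (row_mx A 1%:M) r c = (f r == j)%:R.
    by rewrite mxE g_c row_mxEr mxE.
  have [r0 /eqP f_r0 | no_r0] := pickP (fun r => f r == j); last first.
    rewrite (expand_det_col _ c) big1 => [|r _]; first by right; left.
    by rewrite col_c no_r0 mul0r.
  rewrite (expand_det_col_delta (i0 := r0) (j := c)) => [|r]; last first.
    by rewrite col_c -f_r0 (inj_eq injf).
  apply: in_m101_cofactor.
  have -> : row' r0 (col' c (mxsub f g (row_mx A 1%:M))) =
            mxsub (f \o lift r0) (g \o lift c) (row_mx A 1%:M).
    by apply/matrixP => r r'; rewrite !mxE.
  by apply: IH; [exact: inj_comp injf lift_inj | exact: inj_comp injg lift_inj].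
have g_lt_p c : (g c < p)%N by rewrite ltnNge gc_lt_p.
pose g' c := Ordinal (g_lt_p c).
have -> : mxsub f g (row_mx A 1%:M) = mxsub f g' A.
  apply/matrixP => r c; rewrite [LHS]mxE [RHS]mxE.
  have -> : g c = lshift m (g' c) by apply: val_inj.
  by rewrite row_mxEl.
apply: tuA injf _ => c c' /(congr1 val) g_cc'.
exact/injg/val_inj.
Qed.

Lemma ordinal_system_matrixE n Kt Kh (alpha beta : int)
    (Ct : 'M[int]_(Kt, n)) (Ch : 'M[int]_(Kh, n)) :
  ordinal_system_matrix alpha beta Ct Ch =
  row_mx (col_mx (alpha *: Ct) (beta *: Ch)) 1%:M.
Proof.
by rewrite /ordinal_system_matrix -block_mxEv block_mxEh -block_mxEv -scalar_mx_block.
Qed.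

Lemma col_mx_scale_diag (R : pzRingType) m1 m2 n (a b : R)
    (A : 'M[R]_(m1, n)) (B : 'M[R]_(m2, n)) :
  col_mx (a *: A) (b *: B) =
  diag_mx (row_mx (const_mx a) (const_mx b)) *m col_mx A B.
Proof.
apply/matrixP => i j; rewrite mul_diag_mx !mxE.
by case: splitP => k _; rewrite !mxE.
Qed.

Lemma col_mx_cost_matrix_interval n Kt Kh (ot : 'I_n -> 'I_Kt) (oh : 'I_n -> 'I_Kh) :
  exists pos lo hi,
    col_mx (cost_matrix ot) (cost_matrix oh) = interval_mx pos lo hi.
Proof.
exists (fun r : 'I_(Kt + Kh) => if (r < Kt)%N then Kt - r else r.+1)%N.
exists (fun i => Kt - ot i)%N, (fun i => Kt + (oh i).+1)%N.
apply/matrixP => r i; rewrite !mxE.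
case: splitP => [a -> | b ->]; rewrite mxE; have := ltn_ord (ot i).
  by have := ltn_ord a; case: ifP; lia.
by case: ifP; lia.
Qed.

Theorem corollary1 (n Kt Kh : nat) (alpha beta : int)
  (ot : 'I_n -> 'I_Kt) (oh : 'I_n -> 'I_Kh) :
  in_m101 alpha -> in_m101 beta ->
  totally_unimodular
    (ordinal_system_matrix alpha beta (cost_matrix ot) (cost_matrix oh)).
Proof.
move=> alpha_m101 beta_m101.
have [pos [lo [hi interval_C]]] := col_mx_cost_matrix_interval ot oh.
rewrite ordinal_system_matrixE col_mx_scale_diag interval_C.
apply/totally_unimodular_row_mx1/totally_unimodular_diag_mul.
  by move=> i; rewrite mxE; case: splitP => k _; rewrite mxE.
exact: totally_unimodular_interval_mx.
Qed.
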